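(* $\mathfrak{d}(\beta\omega\setminus\omega,\le_{\mathrm{RK}})=2^{\mathfrak{c}}$.
   Context: $\beta\omega\setminus\omega$ is the set of nonprincipal ultrafilters on $\omega$. For ultrafilters $p,q$ on $\omega$, $p\le_{\mathrm{RK}} q$ (Rudin–Keisler) iff there is $f:\omega\to\omega$ with $p=\{A\subseteq\omega : f^{-1}(A)\in q\}$; this is a preorder, and the definitions below are applied to it verbatim. For a preorder $(P,\le)$, $F\subseteq P$ is dominating if for every $p\in P$ there is $q\in F$ with $p\le q$; $\mathfrak{d}(P,\le)$ is the minimal size of a dominating family. $\mathfrak{c}=2^{\aleph_0}$. *)

From HB Require Import structures.
From mathcomp Require Import all_boot all_order.
From mathcomp Require Import boolp classical_sets functions cardinality.
Set Implicit Arguments. Unset Strict Implicit. Unset Printing Implicit Defensive.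
Local Open Scope classical_set_scope.

Definition ultrafilter (U : set (set nat)) : Prop :=
  [/\ U setT, ~ U set0,
      (forall A B : set nat, U A -> A `<=` B -> U B),
      (forall A B : set nat, U A -> U B -> U (A `&` B)) &
      (forall A : set nat, U A \/ U (~` A))].

Definition nonprincipal (U : set (set nat)) : Prop := forall n : nat, ~ U [set n].

Definition betaN_minus_N : set (set (set nat)) :=
  [set U | ultrafilter U /\ nonprincipal U].

Definition RK_le (p q : set (set nat)) : Prop :=
  exists f : nat -> nat, p = [set A | q (f @^-1` A)].

Definition dominating {T} (P : set T) (le : T -> T -> Prop) (F : set T) : Prop :=
  F `<=` P /\ forall p, P p -> exists2 q, F q & le p q.

(* d(P, <=) = kappa, with kappa given as the cardinality of a set K:
   some dominating family has cardinality |K| and every dominating family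
   has cardinality at least |K| (i.e. |K| is the minimum). *)
Definition dom_number_is {T U} (P : set T) (le : T -> T -> Prop) (K : set U) : Prop :=
  (exists F, dominating P le F /\ (F #= K)%card) /\
  (forall F, dominating P le F -> (K #<= F)%card).

(* An independent family of size c on a countable set yields 2^c distinct nonprincipal
   ultrafilters, indexed injectively by the maps phi : omega^omega -> P(P(omega)): the
   ultrafilter coded by phi contains the independent set indexed by (f, B) iff
   B \in phi f.  If F dominates, each coded ultrafilter is f(q) with q in F, and the pair
   (f, q) determines phi.  Were |F| < 2^c, we could choose, for every f, a value phi f
   differing from psi f for all psi whose code is f(q) with q in F; the code of this phi
   is of that form, a contradiction. *)
From mathcomp Require Import all_boot all_order.
From mathcomp Require Import boolp classical_sets functions cardinality filter.
From Stdlib Require List.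
Set Implicit Arguments. Unset Strict Implicit. Unset Printing Implicit Defensive.
Local Open Scope classical_set_scope.
Local Open Scope card_scope.

Lemma set_inj_card_le T U (A : set T) (B : set U) (f : T -> U) :
  set_fun A B f -> set_inj A f -> A #<= B.
Proof.
move=> fAB finj; have [g] : $|{injfun A >-> B}| by apply/injfunPex; exists f.
exact: inj_card_le.
Qed.

(* If [F] were smaller than [Y], then for each [i] some [miss i] would escape the
   [i]-th coordinates of all [phi] with [Phi phi] in [act i @` F]; but [Phi miss]
   itself is of that form. *)
Lemma card_le_diagonal (I Y Q P : Type) (F : set Q) (act : I -> Q -> P)
    (Phi : (I -> Y) -> P) :
  injective Phi -> (forall phi, exists i, exists2 q, F q & Phi phi = act i q) ->
  [set: Y] #<= F.
Proof.
move=> Phi_inj reach; apply: contrapT => Y_gt_F.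
pose hits i q y := exists phi, Phi phi = act i q /\ phi i = y.
have hits_fun i q y y' : hits i q y -> hits i q y' -> y = y'.
  by move=> [phi [ephi <-]] [psi [epsi <-]]; rewrite (Phi_inj phi psi) // ephi epsi.
have /choice[miss missP] : forall i, exists y, forall q, F q -> ~ hits i q y.
  move=> i; apply: contrapT => /forallNP all_hit; apply: Y_gt_F.
  have /choice[g gP] : forall y, exists q, F q /\ hits i q y.
    move=> y; have /existsNP[q] := all_hit y.
    by move=> /not_implyP[Fq /contrapT]; exists q.
  apply: (@set_inj_card_le _ _ _ _ g) => [y _|y y' _ _ gyy']; first exact: (gP y).1.
  by apply: (hits_fun i (g y)); [exact: (gP y).2|rewrite gyy'; exact: (gP y').2].
have [i [q Fq ePhi]] := reach miss.
by apply: (missP i q Fq); exists miss.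
Qed.

Lemma ultrafilter_fmap (T : Type) (f : T -> nat) (U : set_system T) :
  UltraFilter U -> ultrafilter (fmap f U).
Proof.
move=> UU; split=> /=.
- exact: filterT.
- by rewrite preimage_set0; exact: filter_not_empty.
- by move=> A B UA AB; apply: filterS UA => t /AB.
- by move=> A B; exact: filterI.
- by move=> A; exact: in_ultra_setVsetC.
Qed.

Lemma nonprincipal_fmap (T : Type) (f : T -> nat) (U : set_system T) :
  ProperFilter U -> injective f -> (forall t, U (~` [set t])) ->
  nonprincipal (fmap f U).
Proof.
move=> PU finj Ufree n /= Un.
have [t ftn] := filter_ex Un.
apply: (@filter_not_empty _ U); apply: filterS (filterI Un (Ufree t)) => s [fsn].
by apply; apply: finj; rewrite fsn ftn.
Qed.

Lemma fmap_inj (T U : Type) (f : T -> U) (F G : set_system T) :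
  Filter F -> Filter G -> injective f -> fmap f F = fmap f G -> F = G.
Proof.
move=> FF FG finj eFG.
have fK (H : set_system T) : Filter H -> forall A, H A = fmap f H (f @` A).
  move=> FH A; apply: propext; split => /=; apply: filterS.
    by move=> t At; exists t.
  by move=> t [s As /finj <-].
by apply: funext => A; rewrite (fK F) // (fK G) // eFG.
Qed.

Lemma near_Forall (X T : Type) (F : set_system T) (Q : X -> T -> Prop) (l : list X) :
  Filter F -> List.Forall (fun x => \forall t \near F, Q x t) l ->
  \forall t \near F, List.Forall (Q^~ t) l.
Proof.
move=> FF; elim=> [|x l' Qx _ IH]; first by apply: nearW.
by apply: filterS (filterI Qx IH) => t [Qxt Qlt]; constructor.
Qed.

Section IndependentFamily.
Variable W : countType.

(* A point [(m, S)] lies in [prefix_in j] when [S] contains the length-[m] prefix of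
   [j]; since distinct [j]s eventually have distinct prefixes, these sets form an
   independent family of size [|W|^omega] on a countable set, and the tails
   [m >= n] keep the ultrafilters below nonprincipal. *)
Local Notation point := (nat * list (seq W))%type.

Definition prefix_in (j : nat -> W) : set point := [set c | List.In (mkseq j c.1) c.2].

Local Notation index := (list (nat -> W) * list (nat -> W) * nat)%type.

Definition indep_index (X : set (nat -> W)) : set index :=
  [set i | List.Forall X i.1.1 /\ List.Forall (~` X) i.1.2].

Definition indep_base (i : index) : set point :=
  [set c | [/\ (i.2 <= c.1)%N, List.Forall (prefix_in^~ c) i.1.1
             & List.Forall (fun j => ~ prefix_in j c) i.1.2]].

Definition indep_filter (X : set (nat -> W)) : set_system point :=
  filter_from (indep_index X) indep_base.

Lemma mkseq_separates (j j' : nat -> W) :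
  j <> j' -> \forall m \near \oo, mkseq j m <> mkseq j' m.
Proof.
move=> jj'; have [k jk] : exists k, j k <> j' k.
  apply: contrapT => /forallNP eq_jj'; apply/jj'/funext => k.
  exact: contrapT (eq_jj' k).
exists k.+1 => // m /= km /(congr1 (nth (j 0) ^~ k)).
by rewrite !nth_mkseq.
Qed.

Lemma indep_base_nonempty X i : indep_index X i -> indep_base i !=set0.
Proof.
case: i => [[P N] n] /= [XP XN].
have sepPN : \forall m \near \oo,
    List.Forall (fun p => List.Forall (fun q => mkseq p m <> mkseq q m) N) P.
  apply: near_Forall; apply: List.Forall_impl XP => p Xp.
  apply: near_Forall; apply: List.Forall_impl XN => q Xq.
  by apply: mkseq_separates => epq; apply: Xq; rewrite -epq.
have late : \forall m \near \oo, (n <= m)%N by exists n.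
have [m [nm /List.Forall_forall sepm]] := filter_ex (filterI late sepPN).
exists (m, List.map (fun p => mkseq p m) P); split => //=.
- by apply/List.Forall_forall => p Pp; apply: List.in_map.
- apply/List.Forall_forall => q Nq /List.in_map_iff [p [epq Pp]].
  by move/List.Forall_forall: (sepm p Pp) => /(_ q Nq).
Qed.

Lemma indep_filter_proper X : ProperFilter (indep_filter X).
Proof.
apply: filter_from_proper; last exact: indep_base_nonempty.
apply: filter_from_filter; first by exists ([::], [::], 0%N).
move=> [[P N] n] [[P' N'] n'] /= [XP XN] [XP' XN'].
exists (P ++ P', N ++ N', maxn n n'); first by split; apply/List.Forall_app.
move=> c /= [nc /List.Forall_app[cP cP'] /List.Forall_app[cN cN']].
by move: nc; rewrite geq_max => /andP[nc n'c].
Qed.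

Lemma indep_filter_free X c : indep_filter X (~` [set c]).
Proof.
exists ([::], [::], c.1.+1) => // d [/= cd _ _] ecd.
by rewrite ecd ltnn in cd.
Qed.

Lemma indep_filter_prefix X j : X j -> indep_filter X (prefix_in j).
Proof.
move=> Xj; exists ([:: j], [::], 0%N); first by split; repeat constructor.
by move=> c [_ Pc _]; exact: List.Forall_inv Pc.
Qed.

Lemma indep_filter_prefixC X j : ~ X j -> indep_filter X (~` prefix_in j).
Proof.
move=> Xj; exists ([::], [:: j], 0%N); first by split; repeat constructor.
by move=> c [_ _ Nc]; exact: List.Forall_inv Nc.
Qed.

Definition indep_ultra (X : set (nat -> W)) : set_system point :=
  projT1 (cid (ultraFilterLemma (indep_filter_proper X))).

Lemma indep_ultraP X : UltraFilter (indep_ultra X) /\ indep_filter X `<=` indep_ultra X.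
Proof. exact: projT2 (cid (ultraFilterLemma (indep_filter_proper X))). Qed.

Lemma indep_ultra_prefix X j : indep_ultra X (prefix_in j) <-> X j.
Proof.
have [UX subX] := indep_ultraP X.
split=> [Uj|/indep_filter_prefix/subX//]; apply: contrapT => /indep_filter_prefixC/subX.
move=> Unj; apply: (@filter_not_empty _ (indep_ultra X)).
by apply: filterS (filterI Uj Unj) => c [].
Qed.

Lemma indep_ultra_inj : injective indep_ultra.
Proof.
move=> X Y eXY; apply: funext => j; apply: propext.
by rewrite -!indep_ultra_prefix eXY.
Qed.

Definition indep_code (X : set (nat -> W)) : set (set nat) :=
  fmap pickle (indep_ultra X).

Lemma indep_code_betaN X : betaN_minus_N (indep_code X).
Proof.
have [UX subX] := indep_ultraP X; split; first exact: ultrafilter_fmap.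
apply: nonprincipal_fmap; first exact: pcan_inj (@pickleK_inv _).
by move=> c; apply/subX/indep_filter_free.
Qed.

Lemma indep_code_inj : injective indep_code.
Proof.
move=> X Y eXY; apply: indep_ultra_inj.
have [UX _] := indep_ultraP X; have [UY _] := indep_ultraP Y.
apply: fmap_inj eXY => //; exact: pcan_inj (@pickleK_inv _).
Qed.

End IndependentFamily.

Definition graph_code (phi : (nat -> nat) -> set (set nat)) : set (nat -> nat * bool) :=
  [set j : nat -> nat * bool | phi (fst \o j) [set n | (j n).2]].

Lemma graph_code_inj : injective graph_code.
Proof.
move=> phi psi e; apply/funext => f; apply/funext => B.
pose j n := (f n, `[< B n >]).
have jB : [set n | (j n).2] = B by apply/funext => n; rewrite /= asboolE.
by have := congr1 (fun X => X j) e; rewrite /graph_code /= jB.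
Qed.

Definition betaN_code (phi : (nat -> nat) -> set (set nat)) : set (set nat) :=
  indep_code (graph_code phi).

Lemma betaN_code_inj : injective betaN_code.
Proof. by move=> phi psi /indep_code_inj/graph_code_inj. Qed.

Lemma card_betaN_minus_N : betaN_minus_N #= [set: set (set nat)].
Proof.
apply: Cantor_Bernstein; first exact: card_leT.
apply: (@set_inj_card_le _ _ _ _ (fun S => betaN_code (fun=> S))).
  by move=> S _; exact: indep_code_betaN.
by move=> S S' _ _ /betaN_code_inj/(congr1 (@^~ id)).
Qed.

Theorem mainTheorem18 :
  dom_number_is betaN_minus_N RK_le [set: set (set nat)].
Proof.
split.
  exists betaN_minus_N; split; last exact: card_betaN_minus_N.
  by split=> // p Pp; exists p => //; exists id.
move=> F [_ Fdom].
apply: (card_le_diagonal (act := fun f q => [set A | q (f @^-1` A)]) betaN_code_inj).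
move=> phi; have [q Fq [f eqf]] := Fdom _ (indep_code_betaN (graph_code phi)).
by exists f, q.
Qed.
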